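(* Let $k$ be a field of characteristic $p\ge5$ and $U_k=\operatorname{Spec}k[e_2,e_4,e_6,(e_4^3-e_6^2)^{-1}]$. Then $R^p\in H^0(U_k,\mathcal{T}_{U_k})$ is not of the form $g\cdot R$ for any $g\in H^0(U_k,\mathcal{O}_{U_k})$; that is, the $p$-curvature of the foliation generated by $R$ on $U_k$ is nonzero.
   Context: $R = \frac{e_2^2-e_4}{12}\frac{\partial}{\partial e_2} + \frac{e_2e_4-e_6}{3}\frac{\partial}{\partial e_4} + \frac{e_2e_6-e_4^2}{2}\frac{\partial}{\partial e_6}$ is the Ramanujan vector field, and $R^p$ is its $p$-fold composite as a derivation (again a derivation in characteristic $p$). *)

From HB Require Import structures.
From mathcomp Require Import all_boot all_order all_algebra.
From mathcomp Require Import fraction.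
From mathcomp Require Import mpoly.
Set Implicit Arguments. Unset Strict Implicit. Unset Printing Implicit Defensive.
Import GRing.Theory.
Local Open Scope ring_scope.

Notation "x %:F" := (@FracField.tofrac _ x) : ring_scope.

Definition i2 : 'I_3 := @Ordinal 3 0 isT.
Definition i4 : 'I_3 := @Ordinal 3 1 isT.
Definition i6 : 'I_3 := @Ordinal 3 2 isT.

Definition e2 (k : fieldType) : {mpoly k[3]} := 'X_i2.
Definition e4 (k : fieldType) : {mpoly k[3]} := 'X_i4.
Definition e6 (k : fieldType) : {mpoly k[3]} := 'X_i6.

Definition Disc (k : fieldType) : {mpoly k[3]} := e4 k ^+ 3 - e6 k ^+ 2.

(* The Ramanujan vector field R, acting as a derivation on k[e2,e4,e6]
   (it preserves this subring of O(U_k) = k[e2,e4,e6][Delta^-1]). *)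
Definition ramanujan (k : fieldType) (f : {mpoly k[3]}) : {mpoly k[3]} :=
  ((12%:R : k)^-1)%:MP * (e2 k ^+ 2 - e4 k) * mderiv i2 f
  + ((3%:R : k)^-1)%:MP * (e2 k * e4 k - e6 k) * mderiv i4 f
  + ((2%:R : k)^-1)%:MP * (e2 k * e6 k - e4 k ^+ 2) * mderiv i6 f.

(* O(U_k) = k[e2,e4,e6][Delta^-1], realized inside the fraction field
   Frac(k[e2,e4,e6]) as the elements h / Delta^n. *)
Definition in_OU (k : fieldType) (g : {fraction {mpoly k[3]}}) : Prop :=
  exists (h : {mpoly k[3]}) (n : nat), g = h%:F / (Disc k ^+ n)%:F.

From HB Require Import structures.
From mathcomp Require Import all_boot all_order all_algebra.
From mathcomp Require Import fraction mpoly ring.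
Set Implicit Arguments. Unset Strict Implicit.
Import GRing.Theory.
Local Open Scope ring_scope.

(* At the point e2 = e4 = e6 = 1 all three coefficients of R vanish, so
   there R acts on first-order jets through the Jacobian J of its coefficients,
   and R^n acts through J^n; here J^3 = J^2, so J^n = J^2 for n >= 2.
   If R^p = g R, cross-multiplying the e2 and e4 components gives the
   polynomial identity R^p(e2) R(e4) = R^p(e4) R(e2); both sides vanish at
   the point, and their second e4-derivatives there give the 2x2 minor
   (J^2)_24 J_44 - (J^2)_44 J_24 = 0, whereas this minor is 1/24.  The point
   lies on Delta = 0, outside U_k, but the identity is one of polynomials. *)

Lemma mderivXU (R : nzRingType) n (i j : 'I_n) :
  ('X_j : {mpoly R[n]})^`M(i) = ((j == i)%:R)%:MP.
Proof.
rewrite mderivX mnm1E; case: eqP => [->|_]; last by rewrite scale0r.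
have -> : (U_(i) - U_(i) = 0)%MM by apply/mnmP => l; rewrite mnmBE subnn mnm0E.
by rewrite mpolyX0 scale1r.
Qed.

Section VectorFieldAtAZero.
Variables (R : comNzRingType) (n : nat) (c : 'I_n -> {mpoly R[n]}) (x : 'I_n -> R).

Definition vfield (f : {mpoly R[n]}) : {mpoly R[n]} := \sum_i c i * f^`M(i).

Definition mgrad (f : {mpoly R[n]}) : 'rV[R]_n := \row_j (f^`M(j)).@[x].

Definition jacobian : 'M[R]_n := \matrix_(i, j) ((c i)^`M(j)).@[x].

Hypothesis c_zero : forall i, (c i).@[x] = 0.

Lemma meval_vfield f : (vfield f).@[x] = 0.
Proof.
rewrite /vfield (big_morph _ (mevalD x) (meval0 x)) big1 // => i _.
by rewrite mevalM c_zero mul0r.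
Qed.

Lemma mgrad_vfield f : mgrad (vfield f) = mgrad f *m jacobian.
Proof.
apply/rowP => j; rewrite !mxE /vfield (big_morph _ (@mderivD _ _ j) (@mderiv0 _ _ j)).
rewrite (big_morph _ (mevalD x) (meval0 x)).
apply: eq_bigr => i _; rewrite mderivM mevalD !mevalM c_zero mul0r addr0.
by rewrite !mxE mulrC.
Qed.

Lemma mgrad_iter m f : mgrad (iter m vfield f) = mgrad f *m jacobian ^+ m.
Proof.
elim: m => [|m IH]; first by rewrite expr0 mulmx1.
by rewrite iterS mgrad_vfield IH exprSr -mulmxA -mulmxE.
Qed.

Lemma mgrad_X i : mgrad 'X_i = delta_mx 0 i.
Proof. by apply/rowP => j; rewrite !mxE mderivXU mevalC eq_sym. Qed.

Lemma mderiv_iter_X m i j :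
  ((iter m vfield 'X_i)^`M(j)).@[x] = (jacobian ^+ m) i j.
Proof.
have -> : ((iter m vfield 'X_i)^`M(j)).@[x] = mgrad (iter m vfield 'X_i) 0 j by rewrite mxE.
by rewrite mgrad_iter mgrad_X -rowE mxE.
Qed.

End VectorFieldAtAZero.

Lemma meval_mderiv2M (R : comNzRingType) n (x : 'I_n -> R) j (F G : {mpoly R[n]}) :
  F.@[x] = 0 -> G.@[x] = 0 ->
  ((F * G)^`M(j)^`M(j)).@[x] = 2%:R * (F^`M(j)).@[x] * (G^`M(j)).@[x].
Proof.
move=> F0 G0; rewrite !(mderivM, mderivD) !(mevalD, mevalM) F0 G0.
by rewrite !(mul0r, mulr0, add0r, addr0) -mulrA mulr2n mulrDl mul1r.
Qed.

Lemma sum_ord3 (V : nmodType) (F : 'I_3 -> V) : \sum_i F i = F i2 + F i4 + F i6.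
Proof.
rewrite !big_ord_recl big_ord0 addr0 addrA.
by congr (F _ + F _ + F _); apply: val_inj.
Qed.

Section Ramanujan.
Variable k : fieldType.

Definition ramanujan_coef (i : 'I_3) : {mpoly k[3]} :=
  nth 0 [:: ((12%:R : k)^-1)%:MP * (e2 k ^+ 2 - e4 k);
            ((3%:R : k)^-1)%:MP * (e2 k * e4 k - e6 k);
            ((2%:R : k)^-1)%:MP * (e2 k * e6 k - e4 k ^+ 2)] i.

Lemma ramanujanE f : ramanujan f = vfield ramanujan_coef f.
Proof. by rewrite /vfield sum_ord3. Qed.

Definition ones : 'I_3 -> k := fun=> 1.

Lemma ramanujan_coef_ones i : (ramanujan_coef i).@[ones] = 0.
Proof.
case: i => [[|[|[|//]]] ?]; rewrite /= /e2 /e4 /e6 !(mevalM, mevalB, mevalC, mevalXU, rmorphXn);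
by rewrite /ones !mul1r subrr mulr0.
Qed.

Definition ramanujan_jacobian12 : 'M[k]_3 :=
  \matrix_(i, j) (nth 0 (nth [::] [:: [:: 2; -1; 0]; [:: 4; 4; -4]; [:: 6; -12; 6]] i) j)%:~R.

Hypotheses (two_neq0 : (2%:R : k) != 0) (three_neq0 : (3%:R : k) != 0).

Lemma twelve_neq0 : (12%:R : k) != 0.
Proof. by rewrite (natrM k 4 3) (natrM k 2 2) !mulf_neq0. Qed.

Lemma jacobian_ramanujan :
  jacobian ramanujan_coef ones = (12%:R : k)^-1 *: ramanujan_jacobian12.
Proof.
apply/matrixP => i j; rewrite !mxE.
case: i j => [[|[|[|//]]] ?] [[|[|[|//]]] ?];
  rewrite /= /e2 /e4 /e6 ?expr2 !(mderiv_mulC, mderivB, mderivM, mderivXU);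
  rewrite !(mevalM, mevalB, mevalD, mevalC, mevalXU) /ones /=;
  by field; rewrite ?twelve_neq0 ?three_neq0 ?two_neq0.
Qed.

Lemma ramanujan_jacobian12_cube :
  ramanujan_jacobian12 ^+ 3 = 12%:R *: ramanujan_jacobian12 ^+ 2.
Proof.
apply/matrixP => i j; rewrite !exprS expr0 !mulr1 -!mulmxE !mxE !sum_ord3 !mxE !sum_ord3 !mxE.
by case: i j => [[|[|[|//]]] ?] [[|[|[|//]]] ?] /=; ring.
Qed.

Lemma jacobian_ramanujan_idem :
  jacobian ramanujan_coef ones ^+ 3 = jacobian ramanujan_coef ones ^+ 2.
Proof.
rewrite jacobian_ramanujan !exprZn ramanujan_jacobian12_cube scalerA.
by rewrite exprSr -mulrA mulVf ?twelve_neq0 ?mulr1.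
Qed.

Lemma jacobian_ramanujan_exp m :
  jacobian ramanujan_coef ones ^+ m.+2 = jacobian ramanujan_coef ones ^+ 2.
Proof. by elim: m => // m IH; rewrite exprS IH -exprS jacobian_ramanujan_idem. Qed.

Lemma iter_ramanujan_cross m :
  iter m.+2 (@ramanujan k) 'X_i2 * ramanujan 'X_i4
    != iter m.+2 (@ramanujan k) 'X_i4 * ramanujan 'X_i2 :> {mpoly k[3]}.
Proof.
have iterE l : iter l (@ramanujan k) =1 iter l (vfield ramanujan_coef) :=
  eq_iter ramanujanE l.
have vanish l f : (iter l.+1 (vfield ramanujan_coef) f).@[ones] = 0.
  by rewrite iterS meval_vfield //; apply: ramanujan_coef_ones.
apply/eqP => /(congr1 (fun q => (q^`M(i4)^`M(i4)).@[ones])).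
rewrite -[ramanujan 'X_i2]/(iter 1 (@ramanujan k) _) -[ramanujan 'X_i4]/(iter 1 (@ramanujan k) _).
rewrite !iterE !meval_mderiv2M ?vanish //.
rewrite !mderiv_iter_X; try exact: ramanujan_coef_ones.
rewrite jacobian_ramanujan_exp expr1 jacobian_ramanujan exprZn !mxE !sum_ord3 !mxE /=.
move/eqP; rewrite -subr_eq0; apply/negP.
set minor := (X in X != 0).
have -> : minor = (12%:R : k)^-1 / 2%:R by rewrite /minor; field; rewrite twelve_neq0 two_neq0.
by rewrite mulf_neq0 ?invr_eq0 ?twelve_neq0.
Qed.

End Ramanujan.

Lemma pchar_natr_neq0 (R : nzRingType) p n :
  p \in [pchar R] -> (0 < n < p)%N -> n%:R != 0 :> R.
Proof.
move=> pcharRp /andP[n_gt0 n_lt_p]; rewrite -(dvdn_pcharf pcharRp).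
by apply/negP => /(dvdn_leq n_gt0); rewrite leqNgt n_lt_p.
Qed.

Theorem corollary2p5 (k : fieldType) (p : nat) :
  p \in [pchar k] -> (5 <= p)%N ->
  ~ (exists g : {fraction {mpoly k[3]}},
        in_OU g /\
        forall i : 'I_3,
          (iter p (@ramanujan k) 'X_i)%:F = g * (ramanujan 'X_i)%:F).
Proof.
move=> pcharkp p_ge5 [g [_ iter_eq]].
have two_neq0 : (2%:R : k) != 0 by apply: (pchar_natr_neq0 pcharkp); rewrite /= (leq_trans _ p_ge5).
have three_neq0 : (3%:R : k) != 0 by apply: (pchar_natr_neq0 pcharkp); rewrite /= (leq_trans _ p_ge5).
have [m p_eq] : exists m, p = m.+2 by case: p p_ge5 {pcharkp iter_eq} => [|[|m]] //; exists m.
rewrite {}p_eq in iter_eq.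
have := iter_ramanujan_cross two_neq0 three_neq0 m.
by rewrite -tofrac_eq !tofracM !iter_eq mulrAC eqxx.
Qed.
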